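(* Let $(F_S,\iota)$ be an embedded local étale algebra and $\Gamma\subseteq\mathrm{PGL}_2(F_S)$ a torsion-free plectic subgroup. Then $\Gamma$ is semi-simple, i.e. for no $\mathfrak p\in S$ does $\mathcal L_{\Gamma,\mathfrak p}$ have exactly one element.
   Context: Fix a prime $p$ and let $\mathbf{C}$ be the completion of an algebraic closure of $\mathbb{Q}_p$ or of $\mathbb{F}_p((T))$. An embedded local étale algebra $(F_S,\iota)$ consists of a finite non-empty set $S$, non-Archimedean local fields $F_\mathfrak p$ ($\mathfrak p\in S$) of residue characteristic $p$ and the same characteristic as $\mathbf C$, and embeddings $\iota_\mathfrak p\colon F_\mathfrak p\hookrightarrow\mathbf C$ (so $\mathbb P^1(F_\mathfrak p)\subseteq\mathbb P^1(\mathbf C)$). $\mathrm{PGL}_2(F_S)=\prod_\mathfrak p\mathrm{PGL}_2(F_\mathfrak p)$ acts componentwise by Möbius transformations on $\prod_{\mathfrak p\in S}\mathbb P^1(\mathbf C)$. The limit set $\mathcal L^S_\Gamma$ of a subgroup $\Gamma$ is the set of $x$ with $\gamma_j(y)\to x$ for some $y$ and pairwise distinct $\gamma_j\in\Gamma$. $\Gamma$ is plectic if there are subsets $\mathcal L_{\Gamma,\mathfrak p}\subseteq\mathbb P^1(F_\mathfrak p)$ with $\mathcal L^S_\Gamma=\bigcup_\mathfrak p\big(\mathcal L_{\Gamma,\mathfrak p}\times\prod_{\mathfrak q\ne\mathfrak p}\mathbb P^1(\mathbf C)\big)$. *)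

From HB Require Import structures.
From mathcomp Require Import all_boot all_order all_algebra.
From mathcomp Require Import reals.
Set Implicit Arguments. Unset Strict Implicit. Unset Printing Implicit Defensive.
Import Order.TTheory GRing.Theory Num.Theory.
Local Open Scope ring_scope.

Section Plectic.
Variables (R : realType) (C : fieldType) (v : C -> R).

Definition cvgC (u : nat -> C) (l : C) : Prop :=
  forall e : R, 0 < e -> exists N : nat, forall n, (N <= n)%N -> v (u n - l) < e.

Definition cauchyC (u : nat -> C) : Prop :=
  forall e : R, 0 < e -> exists N : nat, forall m n,
    (N <= m)%N -> (N <= n)%N -> v (u m - u n) < e.

Record nonarch_abs : Prop := {
  abs_ge0 : forall x, 0 <= v x;
  abs_eq0 : forall x, v x = 0 <-> x = 0;
  abs_mul : forall x y, v (x * y) = v x * v y;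
  abs_ultra : forall x y, v (x + y) <= Num.max (v x) (v y);
  abs_nontriv : exists x, x != 0 /\ v x != 1 }.

Record subfield (K : C -> Prop) : Prop := {
  sf0 : K 0; sf1 : K 1;
  sfD : forall x y, K x -> K y -> K (x + y);
  sfN : forall x, K x -> K (- x);
  sfM : forall x y, K x -> K y -> K (x * y);
  sfV : forall x, K x -> K (x^-1) }.

(** K is a (closed) subfield of C which, with the restricted absolute value,
    is a non-Archimedean local field: complete (= closed in the complete C),
    discretely valued, with finite residue field. *)
Record local_subfield (K : C -> Prop) : Prop := {
  ls_subfield : subfield K;
  ls_closed : forall u l, (forall n, K (u n)) -> cvgC u l -> K l;
  ls_discrete : exists pi, [/\ K pi, 0 < v pi, v pi < 1 &
      forall x, K x -> x != 0 -> exists z : int, v x = v pi ^ z];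
  ls_finite_residue : exists s : seq C,
      (forall r, r \in s -> K r /\ v r <= 1) /\
      (forall x, K x -> v x <= 1 -> exists2 r, r \in s & v (x - r) < 1) }.

Definition algebraic_over (K : C -> Prop) (x : C) : Prop :=
  exists q : {poly C}, [/\ q != 0, forall i, K q`_i & root q x].

(** C is (isometric to) the completion of an algebraic closure of Q_p or of
    F_p((T)): C is a complete, algebraically closed non-Archimedean valued
    field containing a closed subfield K0 that is a local field with residue
    field F_p and which, if char C = 0, has p as a uniformizer (so K0 = Q_p;
    if char C = p, then K0 = F_p((T))), and the elements algebraic over K0 are
    dense in C. *)
Record Cp_setting (p : nat) : Prop := {
  cs_prime : prime p;
  cs_abs : nonarch_abs;
  cs_complete : forall u, cauchyC u -> exists l, cvgC u l;
  cs_closed : GRing.closed_field_axiom C;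
  cs_base : exists K0 : C -> Prop,
    [/\ local_subfield K0,
        (forall x, K0 x -> v x <= 1 -> exists2 k, (k < p)%N & v (x - k%:R) < 1),
        (p%:R == 0 :> C) \/
          (forall x, K0 x -> x != 0 -> exists z : int, v x = v (p%:R) ^ z) &
        (forall x (e : R), 0 < e -> exists2 y, algebraic_over K0 y & v (x - y) < e)] }.

(** P^1(C) = C ∪ {∞} with None = ∞, and its (chordal) topology. *)
Definition P1 := option C.

Definition chord (z w : P1) : R :=
  match z, w with
  | Some x, Some y => v (x - y) / (Num.max 1 (v x) * Num.max 1 (v y))
  | Some x, None | None, Some x => 1 / Num.max 1 (v x)
  | None, None => 0
  end.

Definition cvgP1 (u : nat -> P1) (z : P1) : Prop :=
  forall e : R, 0 < e -> exists N : nat, forall n, (N <= n)%N -> chord (u n) z < e.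

Definition inP1 (K : C -> Prop) (z : P1) : Prop :=
  match z with None => True | Some x => K x end.

Definition mobius (A : 'M[C]_2) (z : P1) : P1 :=
  let a := A ord0 ord0 in let b := A ord0 ord_max in
  let c := A ord_max ord0 in let d := A ord_max ord_max in
  match z with
  | Some x => if c * x + d == 0 then None else Some ((a * x + b) / (c * x + d))
  | None => if c == 0 then None else Some (a / c)
  end.

Variables (S : finType) (F : S -> C -> Prop).

(** Representatives in GL_2(F_S) = prod_p GL_2(F_p). *)
Definition inGL (g : S -> 'M[C]_2) : Prop :=
  forall s, (forall i j, F s (g s i j)) /\ \det (g s) != 0.

(** Equality in PGL_2(F_S): componentwise equality up to nonzero scalars. *)
Definition proj_eq (g h : S -> 'M[C]_2) : Prop :=
  forall s, exists2 l : C, l != 0 & h s = l *: g s.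

Definition one_fam : S -> 'M[C]_2 := fun _ => 1%:M.

(** A subgroup of PGL_2(F_S), represented by its (scalar-saturated) preimage
    in GL_2(F_S). *)
Record PGL_subgroup (G : (S -> 'M[C]_2) -> Prop) : Prop := {
  sg_GL : forall g, G g -> inGL g;
  sg_1 : G one_fam;
  sg_M : forall g h, G g -> G h -> G (fun s => g s *m h s);
  sg_V : forall g, G g -> G (fun s => invmx (g s));
  sg_sat : forall g h, G g -> inGL h -> proj_eq g h -> G h }.

Definition torsion_free (G : (S -> 'M[C]_2) -> Prop) : Prop :=
  forall g n, G g -> (0 < n)%N -> proj_eq (fun s => g s ^+ n) one_fam ->
    proj_eq g one_fam.

Definition limit_set (G : (S -> 'M[C]_2) -> Prop) (x : S -> P1) : Prop :=
  exists (y : S -> P1) (gam : nat -> S -> 'M[C]_2),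
    [/\ forall j, G (gam j),
        forall i j, i <> j -> ~ proj_eq (gam i) (gam j) &
        forall s, cvgP1 (fun j => mobius (gam j s) (y s)) (x s)].

(** L : S -> P1 -> Prop exhibits Γ as plectic, with L s = L_{Γ,s}. *)
Definition plectic_decomp (G : (S -> 'M[C]_2) -> Prop) (L : S -> P1 -> Prop) : Prop :=
  (forall s z, L s z -> inP1 (F s) z) /\
  (forall x, limit_set G x <-> exists s, L s (x s)).

End Plectic.

From HB Require Import structures.
From mathcomp Require Import all_boot all_order all_algebra.
From mathcomp Require Import reals.
From mathcomp Require Import ring lra zify.
From mathcomp Require boolp.
Set Implicit Arguments. Unset Strict Implicit. Unset Printing Implicit Defensive.
Import Order.TTheory GRing.Theory Num.Theory.
Local Open Scope ring_scope.

(* Suppose L_{Γ,s} = {z}. For every t pick a square root w_t of a uniformizer of F_t: it lies at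
   chordal distance at least |w_t| from P^1(F_t). The point with coordinate z at s and w_t
   elsewhere is a limit point, say of γ_j y. For t ≠ s this forces y_t ∉ P^1(F_t), which bounds
   |det γ_j(t)| from below once γ_j(t) is scaled to norm 1. By compactness of the unit balls two
   of them, γ_i and γ_j, are then so close at every t ≠ s that E = γ_i^-1 γ_j is there a scalar
   times 1 + Y with |Y| < 1, whence E^(p^k) → 1 as |p| < 1. At s, either E_s fixes a point other
   than z, or it is a scalar times a unipotent matrix and again E_s^(p^k) → 1. As Γ is torsion
   free, the E^(p^k) are pairwise distinct, so we obtain a limit point whose s-coordinate is not z
   and whose other coordinates w_t lie outside P^1(F_t): it belongs to no L_{Γ,t}. *)

Lemma exists_eq_after (T : finType) (f : nat -> T) (J : nat) :
  exists i j, [/\ (J <= i)%N, (i < j)%N & f i = f j].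
Proof.
pose g (k : 'I_#|T|.+1) := f (J + k)%N.
have /injectivePn [k1 [k2 k12 gk]] : ~~ injectiveb g.
  by apply/injectiveP => /leq_card; rewrite card_ord ltnn.
have [lt|lt|eq] := ltngtP k1 k2; last by rewrite (val_inj eq) eqxx in k12.
- by exists (J + k1)%N, (J + k2)%N; rewrite leq_addr ltn_add2l.
- by exists (J + k2)%N, (J + k1)%N; rewrite leq_addr ltn_add2l.
Qed.

Lemma geometric_eventually_lt (R : realType) (th B e : R) :
  0 <= th -> th < 1 -> 0 < e -> exists K, forall k, (K <= k)%N -> th ^+ k * B < e.
Proof.
move=> th0 th1 e0.
have [->|thn0] := eqVneq th 0.
  by exists 1%N => -[|k] //; rewrite expr0n mul0r.
have thp : 0 < th by rewrite lt_def thn0 th0.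
set h := th^-1 - 1.
have hp : 0 < h by rewrite /h subr_gt0 invf_gt1.
(* Bernoulli: [th^-k = (1 + h)^k >= 1 + k h], so [th^k B <= B / (1 + k h)]. *)
have bernoulli k : 1 + k%:R * h <= (1 + h) ^+ k.
  elim: k => [|k ih]; first by rewrite mul0r addr0 expr0.
  rewrite exprSr -natr1; apply: le_trans (ler_wpM2r _ ih); last by rewrite addr_ge0 ?ltW.
  have : 0 <= k%:R * h * h by rewrite !mulr_ge0 // ltW.
  nra.
have thkh k : th ^+ k * (1 + k%:R * h) <= 1.
  have E : th ^+ k * (1 + h) ^+ k = 1 by rewrite -exprMn /h addrC subrK divff // expr1n.
  rewrite -[leRHS]E.
  by apply: ler_wpM2l; [exact: exprn_ge0 | exact: bernoulli].
exists (Num.Def.archi_bound `|B / (e * h)|) => k hk.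
have Bk : B < e * (k%:R * h).
  have kB : `|B / (e * h)| < k%:R.
    by apply: lt_le_trans (archi_boundP (normr_ge0 _)) _; rewrite ler_nat.
  move: (le_lt_trans (ler_norm _) kB); rewrite ltr_pdivrMr ?mulr_gt0 // => lt; nra.
have := thkh k; have := exprn_gt0 k thp; nra.
Qed.

Lemma expr1D_nilpotent (A : pzRingType) (Y : A) n : Y * Y = 0 -> (1 + Y) ^+ n = 1 + Y *+ n.
Proof.
move=> YY; elim: n => [|n ih]; first by rewrite expr0 mulr0n addr0.
rewrite exprSr ih mulrDl mul1r mulrDr mulr1 mulrnAl YY mul0rn addr0.
by rewrite mulrSr -addrA [Y + _]addrC.
Qed.

(** * Two-by-two matrices and homogeneous coordinates *)

Section TwoByTwo.
Variable C : fieldType.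

Lemma ord2_cases (i : 'I_2) : i = ord0 \/ i = ord_max.
Proof. by case: i => -[|[|k]] ik; [left; apply: val_inj | right; apply: val_inj |]. Qed.

Lemma mulmx2E (A B : 'M[C]_2) i j :
  (A *m B) i j = A i ord0 * B ord0 j + A i ord_max * B ord_max j.
Proof.
rewrite !mxE !big_ord_recl big_ord0 addr0.
by have -> : lift ord0 (ord0 : 'I_1) = ord_max :> 'I_2 by apply: val_inj.
Qed.

Lemma det_mx2 (A : 'M[C]_2) :
  \det A = A ord0 ord0 * A ord_max ord_max - A ord0 ord_max * A ord_max ord0.
Proof.
rewrite (expand_det_row _ ord0) !big_ord_recl big_ord0 addr0 /cofactor !det_mx11 !mxE /=.
have -> : lift ord0 (ord0 : 'I_1) = ord_max :> 'I_2 by apply: val_inj.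
rewrite expr0 mul1r expr1 mulN1r mulrN; congr (_ * _ - _ * _); apply: congr2; exact: val_inj.
Qed.

Definition hproj (u : C * C) : P1 C := if u.2 == 0 then None else Some (u.1 / u.2).
Definition hcoord (z : P1 C) : C * C := if z is Some x then (x, 1) else (1, 0).
Definition wedge (a b : C * C) : C := a.1 * b.2 - a.2 * b.1.
Definition hscale (c : C) (u : C * C) : C * C := (c * u.1, c * u.2).
Definition hadd (a b : C * C) : C * C := (a.1 + b.1, a.2 + b.2).
Definition hmul (A : 'M[C]_2) (u : C * C) : C * C :=
  (A ord0 ord0 * u.1 + A ord0 ord_max * u.2, A ord_max ord0 * u.1 + A ord_max ord_max * u.2).

Lemma pair_neq0 (u : C * C) : (u != (0, 0)) = (u.1 != 0) || (u.2 != 0).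
Proof. by case: u => a b; rewrite xpair_eqE negb_and. Qed.

Lemma hcoordK : cancel hcoord hproj.
Proof. by case=> [x|]; rewrite /hproj /= ?eqxx ?oner_eq0 ?divr1. Qed.

Lemma hcoord_neq0 z : hcoord z != (0, 0).
Proof. by rewrite pair_neq0; case: z => [x|]; rewrite /= oner_eq0 ?orbT. Qed.

Lemma mobiusE A z : mobius A z = hproj (hmul A (hcoord z)).
Proof. by case: z => [x|]; rewrite /mobius /hproj /hmul /= ?mulr1 ?mulr0 ?addr0. Qed.

Lemma hprojZ c u : c != 0 -> hproj (hscale c u) = hproj u.
Proof.
move=> c0; rewrite /hproj /hscale /= mulf_eq0 (negbTE c0) /=.
by case: eqP => // _; rewrite -mulf_div divff // mul1r.
Qed.

Lemma hscaleA c c' u : hscale c (hscale c' u) = hscale (c * c') u.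
Proof. by rewrite /hscale /= !mulrA. Qed.

Lemma hcoord_hproj u : u != (0, 0) -> exists2 c, c != 0 & hcoord (hproj u) = hscale c u.
Proof.
rewrite pair_neq0 /hproj; case: (eqVneq u.2 0) => [u2|u2] /=.
  rewrite orbF => u1; exists u.1^-1; first by rewrite invr_eq0.
  by rewrite /hscale mulVf // u2 mulr0.
by move=> _; exists u.2^-1; rewrite ?invr_eq0 // /hscale mulVf // mulrC.
Qed.

Lemma wedge_eq0_colinear a b : a != (0, 0) -> wedge a b = 0 -> exists k, b = hscale k a.
Proof.
case: a => a1 a2; case: b => b1 b2; rewrite pair_neq0 /wedge /hscale /= => a0 w0.
case: (eqVneq a1 0) => [a1_0|a1_0].
  rewrite a1_0 eqxx /= in a0; exists (b2 / a2); rewrite a1_0 mulr0 divfK //.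
  move: w0; rewrite a1_0 mul0r sub0r => /eqP; rewrite oppr_eq0 mulf_eq0 (negbTE a0) /=.
  by move=> /eqP ->.
exists (b1 / a1); rewrite divfK //; congr pair.
apply: (mulIf a1_0); rewrite mulrAC divfK //; apply/eqP; rewrite -subr_eq0; apply/eqP.
by rewrite -w0; ring.
Qed.

Lemma wedge_eq0_hproj a b : hproj a = hproj b -> wedge a b = 0.
Proof.
rewrite /hproj /wedge; case: (eqVneq a.2 0) => [->|a2]; case: (eqVneq b.2 0) => [->|b2] //=.
- by rewrite mulr0 mul0r subrr.
- by move=> [ab]; apply/eqP; rewrite subr_eq0 [a.2 * _]mulrC -eqr_div // ab.
Qed.

Lemma hmulM (A B : 'M[C]_2) u : hmul (A *m B) u = hmul A (hmul B u).
Proof. by rewrite /hmul !mulmx2E /=; congr pair; ring. Qed.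

Lemma hmulZ c (A : 'M[C]_2) u : hmul (c *: A) u = hscale c (hmul A u).
Proof. by rewrite /hmul /hscale !mxE /=; congr pair; ring. Qed.

Lemma hmul1 u : hmul 1 u = u.
Proof. by case: u => a b; rewrite /hmul !mxE /= mul1r mul0r addr0 mul0r add0r mul1r. Qed.

Lemma hmulDl (A B : 'M[C]_2) u : hmul (A + B) u = hadd (hmul A u) (hmul B u).
Proof. by rewrite /hmul /hadd !mxE /=; congr pair; ring. Qed.

Lemma hmul_hscale (A : 'M[C]_2) c u : hmul A (hscale c u) = hscale c (hmul A u).
Proof. by rewrite /hmul /hscale /=; congr pair; ring. Qed.

Lemma mobiusZ c (A : 'M[C]_2) z : c != 0 -> mobius (c *: A) z = mobius A z.
Proof. by move=> c0; rewrite !mobiusE hmulZ hprojZ. Qed.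

Lemma invmx_mulmxZ n (M N : 'M[C]_n) a b : a != 0 -> b != 0 -> M \in unitmx ->
  invmx M *m N = (a / b) *: (invmx (a *: M) *m (b *: N)).
Proof.
move=> a0 b0 uM; rewrite invmxZ ?unitmxZ ?unitfE // -scalemxAr -scalemxAl !scalerA.
by rewrite (_ : _ * _ = 1) ?scale1r //; field; rewrite a0 b0.
Qed.

Lemma mxtrace2 (A : 'M[C]_2) : \tr A = A ord0 ord0 + A ord_max ord_max.
Proof. by rewrite /mxtrace !big_ord_recl big_ord0 addr0; congr (A _ _ + A _ _); apply: val_inj. Qed.

Definition char_root (M : 'M[C]_2) (l : C) : Prop := l ^+ 2 - \tr M * l + \det M = 0.

Lemma char_root_exists (hcl : GRing.closed_field_axiom C) M : exists l, char_root M l.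
Proof.
have [l hl] := hcl 2%N (fun i => if i == 0%N then - \det M else \tr M) isT.
exists l; move: hl; rewrite /char_root !big_ord_recl big_ord0 /= expr0 expr1 mulr1 addr0 => ->.
by ring.
Qed.

Lemma char_root_neq0 M l : \det M != 0 -> char_root M l -> l != 0.
Proof.
move=> dM hl; apply: contraNneq dM => l0.
by move: hl; rewrite /char_root l0 expr0n mulr0 subr0 add0r => ->.
Qed.

Lemma char_root_conj M l : char_root M l -> char_root M (\tr M - l).
Proof. by rewrite /char_root => <-; ring. Qed.

Lemma eigenvector_exists M l : char_root M l -> \tr M != 2%:R * l ->
  exists2 e, e != (0, 0) & hmul M e = hscale l e.
Proof.
rewrite /char_root mxtrace2 det_mx2 /hmul /hscale.
set a := M ord0 ord0; set b := M ord0 ord_max; set c := M ord_max ord0; set d := M ord_max ord_max.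
move=> hl tr2.
have eigen_bl : (a * b + b * (l - a), c * b + d * (l - a)) = (l * b, l * (l - a)).
  congr pair; first by ring.
  by apply/eqP; rewrite -subr_eq0 -oppr_eq0 -hl; apply/eqP; ring.
have [al|la] := eqVneq a l; last first.
  by exists (b, l - a); rewrite // pair_neq0 /= subr_eq0 [l == _]eq_sym la orbT.
have [b0|b0] := eqVneq b 0; last by exists (b, l - a); rewrite // pair_neq0 /= b0.
exists (d - l, - c).
  rewrite pair_neq0 /= subr_eq0; apply/orP; left.
  by apply: contra tr2 => /eqP dl; rewrite al dl mulr_natl mulr2n.
by rewrite /= al b0; congr pair; ring.
Qed.

Lemma hproj_eigen_neq M e1 e2 l1 l2 : e1 != (0, 0) -> e2 != (0, 0) ->
  hmul M e1 = hscale l1 e1 -> hmul M e2 = hscale l2 e2 -> l1 != l2 -> hproj e1 != hproj e2.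
Proof.
move=> e1_0 e2_0 h1 h2 l12; apply/negP => /eqP/wedge_eq0_hproj/(wedge_eq0_colinear e1_0).
move=> [k ek]; have : hscale l2 e2 = hscale l1 e2 by rewrite -h2 ek hmul_hscale h1 !hscaleA mulrC.
move: e2_0; rewrite pair_neq0 /hscale => /orP[] e0 [m1 m2]; move/eqP: l12; apply.
- exact: esym (mulIf e0 m1).
- exact: esym (mulIf e0 m2).
Qed.

Lemma mobius_expr_eigen M e l : e != (0, 0) -> l != 0 -> hmul M e = hscale l e ->
  forall n, mobius (M ^+ n) (hproj e) = hproj e.
Proof.
move=> e0 l0 he n; rewrite mobiusE; have [c c0 ->] := hcoord_hproj e0.
have eigen_n : hmul (M ^+ n) e = hscale (l ^+ n) e.
  elim: n => [|n ih]; first by rewrite expr0 hmul1 /hscale !mul1r; case: (e).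
  by rewrite exprS -mulmxE hmulM ih hmul_hscale he hscaleA -exprSr.
by rewrite hmul_hscale eigen_n hscaleA hprojZ // mulf_neq0 // expf_neq0.
Qed.

Lemma fixed_point_avoiding M l z : \det M != 0 -> char_root M l -> \tr M != 2%:R * l ->
  exists2 f, f != z & forall n, mobius (M ^+ n) f = f.
Proof.
move=> dM hl tr2; set mu := \tr M - l.
have hmu : char_root M mu := char_root_conj hl.
have tr2' : \tr M != 2%:R * mu.
  apply: contra tr2 => /eqP E; rewrite -subr_eq0.
  have -> : \tr M - 2%:R * l = 2%:R * mu - \tr M by rewrite /mu; ring.
  by rewrite -E subrr.
have lmu : l != mu.
  apply: contra tr2 => /eqP E; rewrite -subr_eq0.
  have -> : \tr M - 2%:R * l = mu - l by rewrite /mu; ring.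
  by rewrite -E subrr.
have [e1 e1_0 h1] := eigenvector_exists hl tr2.
have [e2 e2_0 h2] := eigenvector_exists hmu tr2'.
have fix1 := mobius_expr_eigen e1_0 (char_root_neq0 dM hl) h1.
have fix2 := mobius_expr_eigen e2_0 (char_root_neq0 dM hmu) h2.
have [ez|ez] := eqVneq (hproj e1) z; last by exists (hproj e1).
by exists (hproj e2); rewrite // -ez eq_sym (hproj_eigen_neq e1_0 e2_0 h1 h2 lmu).
Qed.

Lemma unipotent_decomp M l : char_root M l -> \tr M = 2%:R * l -> l != 0 ->
  exists Y, M = l *: (1 + Y) /\ Y * Y = 0.
Proof.
move=> hl tr2 l0; exists (l^-1 *: (M - l%:M)); split.
  by rewrite scalerDr scalerA divff // scale1r scalemx1 addrC subrK.
rewrite -scalerAl -scalerAr scalerA -mulmxE; apply/eqP; rewrite scaler_eq0; apply/orP; right.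
move: hl tr2; rewrite /char_root mxtrace2 det_mx2 => hl tr2; apply/eqP/matrixP => i j.
rewrite mulmx2E !mxE /=.
have {}tr2 : M ord_max ord_max = 2%:R * l - M ord0 ord0 by rewrite -tr2; ring.
have {}hl : M ord0 ord_max * M ord_max ord0 = - (M ord0 ord0 - l) ^+ 2.
  by apply/eqP; rewrite -subr_eq0 -oppr_eq0 -hl tr2; apply/eqP; ring.
case: (ord2_cases i) => ->; case: (ord2_cases j) => -> /=;
  rewrite ?mulr0n ?mulr1n ?subr0 ?tr2 ?[M ord_max ord0 * M ord0 ord_max]mulrC ?hl; ring.
Qed.

End TwoByTwo.

(** * Non-Archimedean absolute values and the chordal distance *)

Section NonArchimedean.
Variables (R : realType) (C : fieldType) (v : C -> R).
Hypothesis hv : nonarch_abs v.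

Lemma absv_ge0 x : 0 <= v x. Proof. exact: abs_ge0 hv x. Qed.

Lemma absv0 : v 0 = 0. Proof. exact/(abs_eq0 hv). Qed.

Lemma absv_eq0 x : (v x == 0) = (x == 0).
Proof. by apply/eqP/eqP => [/(abs_eq0 hv)//|->]; exact: absv0. Qed.

Lemma absv_gt0 x : x != 0 -> 0 < v x.
Proof. by move=> x0; rewrite lt_def absv_eq0 x0 absv_ge0. Qed.

Lemma absvM x y : v (x * y) = v x * v y. Proof. exact: abs_mul hv x y. Qed.

Lemma absv1 : v 1 = 1.
Proof.
have v10 : v 1 != 0 by rewrite absv_eq0 oner_neq0.
by apply: (mulfI v10); rewrite -absvM !mulr1.
Qed.

Lemma absvN x : v (- x) = v x.
Proof.
have vN1 : v (-1) = 1.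
  have sq : v (-1) ^+ 2 = 1 by rewrite expr2 -absvM mulrNN mulr1 absv1.
  have := absv_ge0 (-1); move/eqP: sq; rewrite sqrf_eq1 => /orP[/eqP //|/eqP ->].
  by rewrite ler0N1.
by rewrite -mulN1r absvM vN1 mul1r.
Qed.

Lemma absvV x : v x^-1 = (v x)^-1.
Proof.
have [->|x0] := eqVneq x 0; first by rewrite invr0 absv0 invr0.
have vx0 : v x != 0 by rewrite absv_eq0.
by apply: (mulfI vx0); rewrite -absvM !mulfV // absv1.
Qed.

Lemma absvf_div x y : v (x / y) = v x / v y. Proof. by rewrite absvM absvV. Qed.

Lemma absvX x n : v (x ^+ n) = v x ^+ n.
Proof. by elim: n => [|n ih]; rewrite ?expr0 ?absv1 // !exprS absvM ih. Qed.

Lemma absv_distC x y : v (x - y) = v (y - x). Proof. by rewrite -absvN opprB. Qed.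

Lemma absvD_le x y b : v x <= b -> v y <= b -> v (x + y) <= b.
Proof. by move=> hx hy; apply: le_trans (abs_ultra hv x y) _; rewrite ge_max hx hy. Qed.

Lemma absvB_le x y b : v x <= b -> v y <= b -> v (x - y) <= b.
Proof. by move=> hx hy; apply: absvD_le; rewrite ?absvN. Qed.

Lemma absvD_lt x y b : v x < b -> v y < b -> v (x + y) < b.
Proof. by move=> hx hy; apply: le_lt_trans (abs_ultra hv x y) _; rewrite gt_max hx hy. Qed.

Lemma absvD_eqr x y : v x < v y -> v (x + y) = v y.
Proof.
move=> lt; apply/eqP; rewrite eq_le absvD_le ?(ltW lt) //=.
have := abs_ultra hv (x + y) (- x); rewrite absvN addrC addKr le_max.
by case/orP=> // le; move: lt; rewrite ltNge le.
Qed.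

Lemma absvD_eql x y : v y < v x -> v (x + y) = v x.
Proof. by rewrite addrC; exact: absvD_eqr. Qed.

Lemma absvB_max x y : v x != v y -> v (x - y) = Num.max (v x) (v y).
Proof.
case: (ltgtP (v x) (v y)) => // lt _.
- by rewrite absvD_eqr ?absvN // max_r // ltW.
- by rewrite absvD_eql ?absvN // max_l // ltW.
Qed.

Lemma absv_nat_le1 n : v n%:R <= 1.
Proof.
elim: n => [|n ih]; first by rewrite absv0 ler01.
by rewrite -natr1; apply: absvD_le; rewrite ?absv1.
Qed.

Definition hnorm (u : C * C) : R := Num.max (v u.1) (v u.2).
Lemma hnorm_ge0 u : 0 <= hnorm u.
Proof. by rewrite /hnorm le_max absv_ge0. Qed.

Lemma hnorm_gt0 u : 0 < hnorm u = (u != (0, 0)).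
Proof.
rewrite pair_neq0 /hnorm lt_max !lt_def !absv_ge0 !absv_eq0.
by rewrite !andbT.
Qed.

Lemma hnorm_le u b : v u.1 <= b -> v u.2 <= b -> hnorm u <= b.
Proof. by move=> h1 h2; rewrite /hnorm ge_max h1 h2. Qed.

Lemma absv_fst_le u : v u.1 <= hnorm u. Proof. by rewrite /hnorm le_max lexx. Qed.

Lemma absv_snd_le u : v u.2 <= hnorm u. Proof. by rewrite /hnorm le_max lexx orbT. Qed.

Lemma chord_hproj a b : a != (0, 0) -> b != (0, 0) ->
  chord v (hproj a) (hproj b) = v (wedge a b) / (hnorm a * hnorm b).
Proof.
rewrite !pair_neq0 /hproj /wedge /hnorm; case: a => a1 a2; case: b => b1 b2 /=.
have maxE x y : y != 0 -> Num.max 1 (v (x / y)) = Num.max (v x) (v y) / v y.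
  move=> y0; have vy : 0 < v y by apply: absv_gt0.
  by rewrite maxr_pMl ?invr_ge0 ?ltW // divff ?gt_eqF // absvf_div maxC.
have hmax x y : y != 0 -> 0 < Num.max (v x) (v y).
  by move=> y0; rewrite lt_max (absv_gt0 y0) orbT.
case: (eqVneq a2 0) => [->|a20]; case: (eqVneq b2 0) => [->|b20] /=; rewrite ?orbF.
- by rewrite !mulr0 mul0r subrr absv0 mul0r.
- move=> a10 _; rewrite maxE // absv0 mul0r subr0 (max_l (absv_ge0 a1)) absvM.
  have := absv_gt0 a10; have := absv_gt0 b20; have := hmax b1 b2 b20.
  by move=> *; field; rewrite ?gt_eqF.
- move=> _ b10; rewrite maxE // absv0 mulr0 sub0r (max_l (absv_ge0 b1)) absvN absvM.
  have := absv_gt0 b10; have := absv_gt0 a20; have := hmax a1 a2 a20.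
  by move=> *; field; rewrite ?gt_eqF.
- move=> _ _; rewrite !maxE //.
  have -> : a1 / a2 - b1 / b2 = (a1 * b2 - a2 * b1) / (a2 * b2) by field; rewrite a20 b20.
  have := absv_gt0 a20; have := absv_gt0 b20; have := hmax a1 a2 a20; have := hmax b1 b2 b20.
  by move=> *; rewrite absvf_div absvM; field; rewrite ?gt_eqF.
Qed.

Lemma absv_wedge_le a b : v (wedge a b) <= hnorm a * hnorm b.
Proof.
by apply: absvB_le; rewrite absvM ler_pM ?absv_ge0 ?absv_fst_le ?absv_snd_le.
Qed.

Lemma chord_hcoord z w :
  chord v z w = v (wedge (hcoord z) (hcoord w)) / (hnorm (hcoord z) * hnorm (hcoord w)).
Proof. by rewrite -chord_hproj ?hcoord_neq0 // !hcoordK. Qed.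

Lemma chord_le1 z w : chord v z w <= 1.
Proof.
by rewrite chord_hcoord ler_pdivrMr ?mul1r ?absv_wedge_le // mulr_gt0 ?hnorm_gt0 ?hcoord_neq0.
Qed.

Lemma chordC z w : chord v z w = chord v w z.
Proof.
rewrite !chord_hcoord [hnorm _ * _]mulrC -absvN /wedge opprB.
by rewrite [_.1 * _]mulrC [_.2 * _]mulrC.
Qed.

Lemma chordxx z : chord v z z = 0.
Proof.
rewrite chord_hcoord; have -> : wedge (hcoord z) (hcoord z) = 0 by rewrite /wedge mulrC subrr.
by rewrite absv0 mul0r.
Qed.

Lemma chord_ultra x y z : chord v x z <= Num.max (chord v x y) (chord v y z).
Proof.
rewrite !chord_hcoord.
move: (hcoord_neq0 x) (hcoord_neq0 y) (hcoord_neq0 z).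
move: (hcoord x) (hcoord y) (hcoord z) => a b c.
rewrite -!hnorm_gt0 => pa pb pc.
set X := v (wedge a c); set Y := v (wedge a b); set Z := v (wedge b c).
(* Pluecker: [wedge a c * b = wedge a b * c + wedge b c * a] coordinatewise. *)
have key : X * hnorm b <= Num.max (Y * hnorm c) (Z * hnorm a).
  have coord (f : C * C -> C) : f = fst \/ f = snd ->
      X * v (f b) <= Num.max (Y * hnorm c) (Z * hnorm a).
    move=> hf; have fle u : v (f u) <= hnorm u.
      by case: hf => ->; rewrite ?absv_fst_le ?absv_snd_le.
    have -> : X * v (f b) = v (wedge a b * f c + wedge b c * f a).
      by rewrite /X -absvM; congr (v _); case: hf => ->; rewrite /wedge; ring.
    by apply: absvD_le; rewrite absvM le_max -/Y -/Z ler_wpM2l ?absv_ge0 ?fle ?orbT.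
  rewrite /hnorm maxr_pMr ?absv_ge0 // ge_max.
  by rewrite (coord fst (or_introl erefl)) (coord snd (or_intror erefl)).
have pabc : 0 < hnorm a * hnorm b * hnorm c by rewrite !mulr_gt0.
have -> : X / (hnorm a * hnorm c) = X * hnorm b / (hnorm a * hnorm b * hnorm c).
  by field; rewrite !gt_eqF.
have -> : Y / (hnorm a * hnorm b) = Y * hnorm c / (hnorm a * hnorm b * hnorm c).
  by field; rewrite !gt_eqF.
have -> : Z / (hnorm b * hnorm c) = Z * hnorm a / (hnorm a * hnorm b * hnorm c).
  by field; rewrite !gt_eqF.
rewrite -maxr_pMl; last by rewrite invr_ge0 ltW.
by rewrite ler_pM2r // invr_gt0.
Qed.

Lemma chord_hadd_le u d : u != (0, 0) -> chord v (hproj (hadd u d)) (hproj u) <= hnorm d / hnorm u.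
Proof.
rewrite -hnorm_gt0 => pu.
have [ud|du] := leP (hnorm u) (hnorm d).
  by apply: le_trans (chord_le1 _ _) _; rewrite ler_pdivlMr // mul1r.
have hnorm_add : hnorm (hadd u d) = hnorm u.
  have lt1 := le_lt_trans (absv_fst_le d) du; have lt2 := le_lt_trans (absv_snd_le d) du.
  rewrite /hnorm /hadd /= in lt1 lt2 *.
  have [m1|m1] := leP (v u.2) (v u.1).
  - rewrite (max_l m1) in lt1 lt2.
    by rewrite absvD_eql // max_l // absvD_le // ltW.
  - rewrite (max_r (ltW m1)) in lt1 lt2.
    by rewrite [v (u.2 + _)]absvD_eql // max_r // absvD_le // ltW.
have nud : hadd u d != (0, 0) by rewrite -hnorm_gt0 hnorm_add.
rewrite chord_hproj -?hnorm_gt0 ?hnorm_add //.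
have -> : wedge (hadd u d) u = wedge d u by rewrite /wedge /hadd /=; ring.
rewrite ler_pdivrMr ?mulr_gt0 // mulrA divfK ?gt_eqF //.
exact: absv_wedge_le.
Qed.

(** * Matrix norm and iterates of Möbius transformations *)

Definition mxnorm (A : 'M[C]_2) : R :=
  Num.max (Num.max (v (A ord0 ord0)) (v (A ord0 ord_max)))
          (Num.max (v (A ord_max ord0)) (v (A ord_max ord_max))).

Lemma absv_le_mxnorm (A : 'M[C]_2) i j : v (A i j) <= mxnorm A.
Proof.
by case: (ord2_cases i) => ->; case: (ord2_cases j) => ->; rewrite /mxnorm !le_max lexx ?orbT.
Qed.

Lemma mxnorm_le (A : 'M[C]_2) b : (forall i j, v (A i j) <= b) -> mxnorm A <= b.
Proof. by move=> h; rewrite /mxnorm !ge_max !h. Qed.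

Lemma mxnorm_ge0 (A : 'M[C]_2) : 0 <= mxnorm A.
Proof. exact: le_trans (absv_ge0 _) (absv_le_mxnorm A ord0 ord0). Qed.

Lemma mxnorm_attained (A : 'M[C]_2) : exists i j, v (A i j) = mxnorm A.
Proof.
have max_cases (x y : R) : Num.max x y = x \/ Num.max x y = y.
  by rewrite maxEle; case: ifP; [right|left].
rewrite /mxnorm; case: (max_cases (Num.max (v (A ord0 ord0)) (v (A ord0 ord_max)))
  (Num.max (v (A ord_max ord0)) (v (A ord_max ord_max)))) => ->.
- by case: (max_cases (v (A ord0 ord0)) (v (A ord0 ord_max))) => ->; do 2 eexists.
- by case: (max_cases (v (A ord_max ord0)) (v (A ord_max ord_max))) => ->; do 2 eexists.
Qed.

Lemma mxnormM (A B : 'M[C]_2) : mxnorm (A * B) <= mxnorm A * mxnorm B.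
Proof.
apply: mxnorm_le => i j; rewrite -mulmxE mulmx2E.
by apply: absvD_le; rewrite absvM ler_pM ?absv_ge0 ?absv_le_mxnorm.
Qed.

Lemma mxnormD_le (A B : 'M[C]_2) b : mxnorm A <= b -> mxnorm B <= b -> mxnorm (A + B) <= b.
Proof.
move=> hA hB; apply: mxnorm_le => i j; rewrite mxE.
by apply: absvD_le; [apply: le_trans hA | apply: le_trans hB]; exact: absv_le_mxnorm.
Qed.

Lemma mxnormZ c (A : 'M[C]_2) : mxnorm (c *: A) = v c * mxnorm A.
Proof. by rewrite /mxnorm !mxE !absvM !maxr_pMr ?absv_ge0. Qed.

Lemma mxnormMn n (A : 'M[C]_2) : mxnorm (A *+ n) = v n%:R * mxnorm A.
Proof. by rewrite -scaler_nat mxnormZ. Qed.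

Lemma hnorm_hmul_le (A : 'M[C]_2) u : hnorm (hmul A u) <= mxnorm A * hnorm u.
Proof.
by apply: hnorm_le; apply: absvD_le;
  rewrite absvM ler_pM ?absv_ge0 ?absv_le_mxnorm ?absv_fst_le ?absv_snd_le.
Qed.

Lemma mobius_cvg_near1 z (Z : nat -> 'M[C]_2) :
  (forall e, 0 < e -> exists K, forall k, (K <= k)%N -> mxnorm (Z k) < e) ->
  cvgP1 v (fun k => mobius (1 + Z k) z) z.
Proof.
move=> Z0 e e0; have u0 := hcoord_neq0 z.
have pu : 0 < hnorm (hcoord z) by rewrite hnorm_gt0.
have [K hK] := Z0 e e0.
exists K => k kK; rewrite mobiusE hmulDl hmul1 -[X in chord v _ X]hcoordK.
apply: le_lt_trans (chord_hadd_le _ u0) _; rewrite ltr_pdivrMr //.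
by apply: le_lt_trans (hnorm_hmul_le _ _) _; rewrite ltr_pM2r // hK.
Qed.

Lemma expr1D_decomp (Y : 'M[C]_2) n : mxnorm Y <= 1 ->
  exists E, (1 + Y) ^+ n = 1 + Y *+ n + E /\ mxnorm E <= mxnorm Y ^+ 2.
Proof.
move=> Y1; have Y0 := mxnorm_ge0 Y; elim: n => [|n [E [eq hE]]].
  exists 0; rewrite expr0 mulr0n !addr0; split=> //.
  by apply: mxnorm_le => i j; rewrite mxE absv0 exprn_ge0.
exists (Y *+ n * Y + E + E * Y); split.
  rewrite exprSr eq !mulrDl !mulrDr !mul1r !mulr1 mulrSr.
  rewrite -!addrA; congr (_ + _); rewrite !addrA; congr (_ + _).
  by rewrite [Y *+ n + Y]addrC -!addrA.
rewrite expr2; repeat apply: mxnormD_le => //.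
- apply: le_trans (mxnormM _ _) _; rewrite ler_wpM2r // mxnormMn.
  by rewrite ler_piMl ?absv_nat_le1.
- apply: le_trans (mxnormM _ _) _; rewrite -expr2.
  by rewrite -[leRHS]mulr1 ler_pM ?mxnorm_ge0.
Qed.

Lemma expr1D_pexpn (Y : 'M[C]_2) (p : nat) : mxnorm Y < 1 -> v p%:R < 1 ->
  forall k, exists E, (1 + Y) ^+ (p ^ k) = 1 + E /\
    mxnorm E <= Num.max (v p%:R) (mxnorm Y) ^+ k * mxnorm Y.
Proof.
move=> Y1 p1; set th := Num.max _ _.
have th0 : 0 <= th by rewrite le_max absv_ge0.
have th1 : th <= 1 by rewrite ge_max !ltW.
elim=> [|k [E [eq hE]]]; first by exists Y; rewrite expn0 expr1 expr0 mul1r.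
have EY : mxnorm E <= mxnorm Y by apply: le_trans hE _; rewrite ler_piMl ?mxnorm_ge0 ?exprn_ile1.
have [E' [eq' hE']] := expr1D_decomp p (le_trans EY (ltW Y1)).
have E0 := mxnorm_ge0 E.
exists (E *+ p + E'); split; first by rewrite expnSr exprM eq eq' addrA.
apply: (@le_trans _ _ (th * mxnorm E)); last by rewrite exprS -mulrA ler_wpM2l.
apply: mxnormD_le.
  by rewrite mxnormMn ler_wpM2r // le_max lexx.
by apply: le_trans hE' _; rewrite expr2 ler_wpM2r // le_max EY orbT.
Qed.

Lemma mobius_pexpn_near1 (p : nat) c (Y : 'M[C]_2) z :
  v p%:R < 1 -> c != 0 -> mxnorm Y < 1 ->
  cvgP1 v (fun k => mobius ((c *: (1 + Y)) ^+ (p ^ k)) z) z.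
Proof.
move=> p1 c0 Y1; have [E hE] := boolp.choice (expr1D_pexpn Y1 p1).
have -> : (fun k => mobius ((c *: (1 + Y)) ^+ (p ^ k)) z) = (fun k => mobius (1 + E k) z).
  by apply: boolp.funext => k; rewrite exprZn mobiusZ ?expf_neq0 // (proj1 (hE k)).
apply: mobius_cvg_near1 => e e0.
have th0 : 0 <= Num.max (v p%:R) (mxnorm Y) by rewrite le_max absv_ge0.
have th1 : Num.max (v p%:R) (mxnorm Y) < 1 by rewrite gt_max p1 Y1.
have [K hK] := geometric_eventually_lt (mxnorm Y) th0 th1 e0.
by exists K => k /hK; apply: le_lt_trans (proj2 (hE k)).
Qed.

Lemma mobius_pexpn_unipotent (p : nat) l (Y : 'M[C]_2) z :
  v p%:R < 1 -> l != 0 -> Y * Y = 0 ->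
  cvgP1 v (fun k => mobius ((l *: (1 + Y)) ^+ (p ^ k)) z) z.
Proof.
move=> p1 l0 YY.
have -> : (fun k => mobius ((l *: (1 + Y)) ^+ (p ^ k)) z) = (fun k => mobius (1 + Y *+ p ^ k) z).
  by apply: boolp.funext => k; rewrite exprZn mobiusZ ?expf_neq0 // expr1D_nilpotent.
apply: mobius_cvg_near1 => e e0.
have [K hK] := geometric_eventually_lt (mxnorm Y) (absv_ge0 p%:R) p1 e0.
by exists K => k /hK; rewrite mxnormMn natrX absvX.
Qed.

Lemma mobius_pexpn_dichotomy (hcl : GRing.closed_field_axiom C) (p : nat) (M : 'M[C]_2) z w :
  v p%:R < 1 -> \det M != 0 -> Some w != z ->
  exists2 u, u != z & cvgP1 v (fun k => mobius (M ^+ (p ^ k)) u) u.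
Proof.
move=> p1 dM wz; have [l hl] := char_root_exists hcl M.
have [tr2|tr2] := eqVneq (\tr M) (2%:R * l).
  have l0 := char_root_neq0 dM hl.
  have [Y [MY YY]] := unipotent_decomp hl tr2 l0.
  by exists (Some w); rewrite // MY; exact: mobius_pexpn_unipotent p1 l0 YY.
have [f fz fixf] := fixed_point_avoiding z dM hl tr2.
by exists f => // e e0; exists 0%N => k _; rewrite fixf chordxx.
Qed.

(** * Local fields *)

Definition far_from (K : C -> Prop) (w : C) : Prop :=
  0 < v w /\ forall z, inP1 K z -> v w <= chord v (Some w) z.

Lemma far_from_notin K w : far_from K w -> ~ K w.
Proof. by case=> w0 far Kw; have := far (Some w) Kw; rewrite chordxx leNgt w0. Qed.

Lemma inP1_hproj K (u : C * C) : subfield K -> K u.1 -> K u.2 -> inP1 K (hproj u).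
Proof. by move=> hK K1 K2; rewrite /hproj; case: eqP => //= _; apply: sfM; last exact: sfV. Qed.

Lemma inP1_mobius K (A : 'M[C]_2) z :
  subfield K -> (forall i j, K (A i j)) -> inP1 K z -> inP1 K (mobius A z).
Proof.
move=> hK KA Kz; rewrite mobiusE; apply: inP1_hproj => //;
  case: z Kz => [x|] /= Kx; rewrite /hmul /=;
  apply: (sfD hK); apply: (sfM hK);
  by first [exact: KA | exact: Kx | exact: sf0 hK | exact: sf1 hK].
Qed.

Lemma notin_P1_of_cvg_far K w y (A : nat -> 'M[C]_2) : subfield K -> far_from K w ->
  (forall j i k, K (A j i k)) -> cvgP1 v (fun j => mobius (A j) y) (Some w) -> ~ inP1 K y.
Proof.
move=> hK [w0 far] KA cvg Ky; have [N hN] := cvg _ w0.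
have := far _ (inP1_mobius hK (KA N) Ky).
by rewrite chordC leNgt hN.
Qed.

Lemma far_point_exists K : GRing.closed_field_axiom C -> local_subfield v K ->
  exists w, far_from K w.
Proof.
move=> hcl hK; have [pi [Kpi pi0 pi1 hdisc]] := ls_discrete hK.
have [w hw] := hcl 2%N (fun i => if i == 0%N then pi else 0) isT.
rewrite !big_ord_recl big_ord0 /= expr0 mulr1 mul0r !addr0 in hw.
have vw2 : v w ^+ 2 = v pi by rewrite -absvX hw.
have w0 : 0 < v w.
  by rewrite absv_gt0 //; apply: contraTneq pi0 => w0; rewrite -vw2 w0 absv0 expr0n ltxx.
have w1 : v w < 1 by rewrite -(expr_lt1 (n := 2)) ?absv_ge0 // vw2.
(* [v w] is [v pi ^ (1/2)], which is not a value of [v] on [K]. *)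
have vKw x : K x -> v x != v w.
  move=> Kx; have [->|x0] := eqVneq x 0; first by rewrite absv0 lt_eqF.
  have [n vx] := hdisc x Kx x0; apply/eqP => vxw.
  have : v pi ^ (n * 2%:Z) = v pi ^ 1.
    by rewrite -exprz_exp -vx vxw expr1z -vw2.
  by move/(ieexprIz pi0 (negbT (lt_eqF pi1))); lia.
exists w; split=> // -[x /= Kx|_]; rewrite /chord (max_l (ltW w1)) mul1r; last first.
  by rewrite invr1 ltW.
rewrite absvB_max; last by rewrite eq_sym vKw.
have [x1|x1] := leP (v x) 1.
  by rewrite divr1 le_max lexx.
rewrite ler_pdivlMr ?(lt_trans ltr01) // le_max; apply/orP; right.
by rewrite ler_piMl ?absv_ge0 // ltW.
Qed.

Lemma notin_dist_pos K y : local_subfield v K -> ~ K y ->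
  exists2 d, 0 < d & forall x, K x -> d <= v (y - x).
Proof.
move=> hK Ky; apply: boolp.contrapT => nodist; apply: Ky.
have near n : exists x, K x /\ v (y - x) < n.+1%:R^-1.
  apply: boolp.contrapT => nox; apply: nodist; exists n.+1%:R^-1; rewrite ?invr_gt0 ?ltr0n //.
  by move=> x Kx; rewrite leNgt; apply/negP => lt; apply: nox; exists x.
have [u hu] := boolp.choice near.
apply: (ls_closed hK (u := u)); first by move=> n; case: (hu n).
move=> e e0; exists (Num.Def.archi_bound e^-1) => n le_n.
rewrite absv_distC; apply: lt_le_trans (proj2 (hu n)) _.
rewrite -[e]invrK lef_pV2 ?posrE ?invr_gt0 ?ltr0n //.
apply: le_trans (ltW (archi_boundP _)) _; first by rewrite invr_ge0 ltW.
by rewrite ler_nat; apply: leq_trans le_n _.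
Qed.

Lemma notin_hdist_pos K y : local_subfield v K -> ~ K y ->
  exists2 d, 0 < d & forall k1 k2, K k1 -> K k2 -> d * hnorm (k1, k2) <= v (y * k2 - k1).
Proof.
move=> hK Ky; have [d0 d0_0 hd0] := notin_dist_pos hK Ky.
have sK := ls_subfield hK; set Y := Num.max 1 (v y).
have Y1 : 1 <= Y by rewrite le_max lexx.
have Y0 : 0 < Y by apply: lt_le_trans Y1.
have d1_0 : 0 < Num.min d0 1 by rewrite lt_min d0_0 ltr01.
exists (Num.min d0 1 / Y) => [|k1 k2 K1 K2]; first by rewrite divr_gt0.
have d1 : Num.min d0 1 / Y <= 1.
  by rewrite ler_pdivrMr // mul1r; apply: le_trans Y1; rewrite ge_min lexx orbT.
have [->|k2_0] := eqVneq k2 0.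
  by rewrite mulr0 sub0r absvN /hnorm /= absv0 max_l ?absv_ge0 // ler_piMl ?absv_ge0.
have near_k2 : Num.min d0 1 * v k2 <= v (y * k2 - k1).
  have -> : y * k2 - k1 = k2 * (y - k1 / k2) by field.
  rewrite absvM mulrC ler_wpM2l ?absv_ge0 //.
  apply: le_trans (hd0 _ _); first by rewrite ge_min lexx.
  by apply: (sfM sK) => //; apply: (sfV sK).
have [k1_le|k1_gt] := leP (v k1) (Y * v k2).
  apply: le_trans near_k2; apply: (@le_trans _ _ (Num.min d0 1 / Y * (Y * v k2))).
    rewrite ler_wpM2l ?(divr_ge0 (ltW d1_0) (ltW Y0)) //.
    by rewrite /hnorm /= ge_max k1_le ler_peMl ?absv_ge0.
  by rewrite mulrA divfK ?gt_eqF.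
have k21 : v k2 < v k1 by apply: le_lt_trans k1_gt; rewrite ler_peMl ?absv_ge0.
have yk21 : v (y * k2) < v k1.
  by apply: le_lt_trans k1_gt; rewrite absvM ler_wpM2r ?absv_ge0 // le_max lexx orbT.
rewrite absvB_max ?(lt_eqF yk21) // (max_r (ltW yk21)) /hnorm /= (max_l (ltW k21)).
by rewrite ler_piMl ?absv_ge0.
Qed.

Lemma mobius_near_column K (A : 'M[C]_2) y d : subfield K -> (forall i j, K (A i j)) ->
  mxnorm A = 1 -> 0 < d ->
  (forall k1 k2, K k1 -> K k2 -> d * hnorm (k1, k2) <= v (y * k2 - k1)) ->
  exists2 z, inP1 K z & chord v (mobius A (Some y)) z <= hnorm (y, 1) * v (\det A) / d.
Proof.
move=> hK KA A1 d0 hy; rewrite mobiusE det_mx2.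
set u := hmul A (hcoord (Some y)); pose col j := (A ord0 j, A ord_max j).
have y1 : 1 <= hnorm (y, 1) by rewrite /hnorm /= absv1 le_max lexx orbT.
have row_far i : d * Num.max (v (A i ord0)) (v (A i ord_max)) <= v (A i ord0 * y + A i ord_max).
  have := hy (- A i ord_max) (A i ord0) (sfN hK (KA _ _)) (KA _ _).
  by rewrite /hnorm /= absvN maxC opprK [y * _]mulrC.
have u_ge : d <= hnorm u.
  rewrite -[d]mulr1 -A1 /mxnorm (maxr_pMr _ _ (ltW d0)) ge_max /hnorm /u /hmul /= !mulr1 !le_max.
  by rewrite !row_far orbT.
have u0 : u != (0, 0) by rewrite -hnorm_gt0 (lt_le_trans d0).
(* A column of [A] of norm 1; its wedge with [u] is [- det A] or [y * det A]. *)
have [i [j Aij]] := mxnorm_attained A.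
have colj1 : hnorm (col j) = 1.
  apply/eqP; rewrite eq_le hnorm_le -?A1 ?absv_le_mxnorm //=.
  rewrite -[X in X <= _]Aij; case: (ord2_cases i) => ->.
  - exact: (absv_fst_le (col j)).
  - exact: (absv_snd_le (col j)).
have colj0 : col j != (0, 0) by rewrite -hnorm_gt0 colj1 ltr01.
exists (hproj (col j)); first exact: (@inP1_hproj K (col j) hK (KA ord0 j) (KA ord_max j)).
rewrite chord_hproj // colj1 mulr1 ler_pdivrMr ?(lt_le_trans d0) //.
apply: le_trans (_ : _ <= hnorm (y, 1) * v (A ord0 ord0 * A ord_max ord_max -
  A ord0 ord_max * A ord_max ord0)) _; last first.
  set X := hnorm (y, 1) * _; have X0 : 0 <= X by rewrite mulr_ge0 ?hnorm_ge0 ?absv_ge0.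
  rewrite -[leLHS](divfK (lt0r_neq0 d0)).
  by apply: ler_wpM2l; [exact: divr_ge0 X0 (ltW d0) | exact: u_ge].
rewrite /wedge /u /hmul /col /= !mulr1; case: (ord2_cases j) => ->.
- rewrite (_ : _ - _ = - (A ord0 ord0 * A ord_max ord_max - A ord0 ord_max * A ord_max ord0));
    last by ring.
  by rewrite absvN; exact: ler_peMl (absv_ge0 _) y1.
- rewrite (_ : _ - _ = y * (A ord0 ord0 * A ord_max ord_max - A ord0 ord_max * A ord_max ord0));
    last by ring.
  by rewrite absvM; exact: ler_wpM2r (absv_ge0 _) _ _ (absv_fst_le (y, 1)).
Qed.

Lemma det_lower_bound K y w : local_subfield v K -> ~ K y -> far_from K w ->
  exists2 eta, 0 < eta & forall A : 'M[C]_2, (forall i j, K (A i j)) -> mxnorm A = 1 ->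
    chord v (mobius A (Some y)) (Some w) < v w -> eta <= v (\det A).
Proof.
move=> hK Ky [w0 far]; have [d d0 hy] := notin_hdist_pos hK Ky.
have y0 : 0 < hnorm (y, 1) by rewrite hnorm_gt0 pair_neq0 oner_eq0 orbT.
exists (v w * d / hnorm (y, 1)) => [|A KA A1 Aw]; first by rewrite divr_gt0 ?mulr_gt0.
rewrite leNgt; apply/negP => small.
have [z Kz Az] := mobius_near_column (ls_subfield hK) KA A1 d0 hy.
have Azw : chord v (mobius A (Some y)) z < v w.
  by apply: le_lt_trans Az _; rewrite ltr_pdivrMr // mulrC -ltr_pdivlMr.
have := far z Kz; rewrite leNgt => /negP; apply.
by apply: le_lt_trans (chord_ultra _ (mobius A (Some y)) _) _; rewrite gt_max chordC Aw.
Qed.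

Lemma mxnormalize K (M : 'M[C]_2) : subfield K -> (forall i j, K (M i j)) -> M != 0 ->
  exists c, [/\ c != 0, K c & mxnorm (c *: M) = 1].
Proof.
move=> hK KM M0; have [i [j Mij]] := mxnorm_attained M.
have Mij0 : M i j != 0.
  apply: contraNneq M0 => Mij0; apply/eqP/matrixP => i' j'; rewrite mxE; apply/eqP.
  by rewrite -absv_eq0 eq_le absv_ge0 andbT -absv0 -Mij0 Mij absv_le_mxnorm.
exists (M i j)^-1; split; [by rewrite invr_eq0 | exact: sfV | ].
by rewrite mxnormZ absvV Mij mulVf // -Mij absv_eq0.
Qed.

Lemma mxnorm_adj_le (A : 'M[C]_2) : mxnorm (\adj A) <= mxnorm A.
Proof.
apply: mxnorm_le => i j; rewrite mxE /cofactor det_mx11 absvM absvX absvN absv1 expr1n mul1r.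
by rewrite !mxE absv_le_mxnorm.
Qed.

Lemma invmx_mul_near1 (A B : 'M[C]_2) : mxnorm A <= 1 -> mxnorm (B - A) < v (\det A) ->
  exists Y, invmx A *m B = 1 + Y /\ mxnorm Y < 1.
Proof.
move=> A1 BA; have dA0 : 0 < v (\det A) := le_lt_trans (mxnorm_ge0 _) BA.
have uA : A \in unitmx by rewrite unitmxE unitfE -absv_eq0 gt_eqF.
exists (invmx A *m (B - A)); split; first by rewrite mulmxBr mulVmx // addrC subrK.
rewrite {1}/invmx uA -scalemxAl mxnormZ absvV ltr_pdivrMl // mulr1 mulmxE.
apply: le_lt_trans (mxnormM _ _) _; apply: le_lt_trans BA.
by rewrite ler_piMl ?mxnorm_ge0 // (le_trans (mxnorm_adj_le A)).
Qed.

Lemma unit_ball_finite_net K eta : local_subfield v K -> 0 < eta ->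
  exists s : seq C, forall x, K x -> v x <= 1 -> exists2 r, r \in s & v (x - r) < eta.
Proof.
move=> hK eta0; have sK := ls_subfield hK.
have [pi [Kpi pi0 pi1 hdisc]] := ls_discrete hK; have [s0 [hs0 hres]] := ls_finite_residue hK.
have pi_max x : K x -> v x < 1 -> v x <= v pi.
  move=> Kx x1; have [->|x0] := eqVneq x 0; first by rewrite absv0 ltW.
  have [[[|n]|n] vx] := hdisc x Kx x0; rewrite vx in x1 *.
  - by rewrite expr0z ltxx in x1.
  - by rewrite ler_iXnr // ltW.
  - move: x1; have -> : v pi ^ Negz n = (v pi ^+ n.+1)^-1 by [].
    by rewrite ltNge invf_ge1 ?exprn_gt0 // exprn_ile1 // ltW.
(* Digit expansion: the [r0 + pi * r] with [r0] in [s0] and [r] in the net at precision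
   [v pi ^+ n] form a net at precision [v pi ^+ n.+1]. *)
have net n : exists s : seq C, forall x, K x -> v x <= 1 ->
    exists2 r, r \in s & v (x - r) <= v pi ^+ n.
  elim: n => [|n [sn hsn]]; first by exists [:: 0] => x _ x1; exists 0; rewrite ?inE ?subr0.
  exists [seq r0 + pi * r | r0 <- s0, r <- sn] => x Kx x1.
  have [r0 r0s xr0] := hres x Kx x1; have [Kr0 _] := hs0 r0 r0s.
  have Kd : K (x - r0) by apply: (sfD sK) => //; apply: (sfN sK).
  have pi_0 : pi != 0 by rewrite -absv_eq0 gt_eqF.
  have Kq : K ((x - r0) / pi) by apply: (sfM sK) => //; apply: (sfV sK).
  have q1 : v ((x - r0) / pi) <= 1 by rewrite absvf_div ler_pdivrMr // mul1r pi_max.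
  have [r rs xr] := hsn _ Kq q1.
  exists (r0 + pi * r); first by apply/allpairsP; exists (r0, r).
  have -> : x - (r0 + pi * r) = pi * ((x - r0) / pi - r) by field.
  by rewrite absvM exprS ler_wpM2l // ltW.
have [N hN] := geometric_eventually_lt 1 (ltW pi0) pi1 eta0.
have [sN hsN] := net N; exists sN => x Kx x1; have [r rs xr] := hsN x Kx x1.
by exists r => //; apply: le_lt_trans xr _; rewrite -[_ ^+ N]mulr1 hN.
Qed.

Lemma Cp_absv_p_lt1 p : Cp_setting v p -> v p%:R < 1.
Proof.
case=> _ _ _ _ [K0 [hK0 _ hp _]]; have [pi [Kpi pi0 pi1 _]] := ls_discrete hK0.
case: hp => [/eqP -> | hp]; first by rewrite absv0 ltr01.
have pi_0 : pi != 0 by rewrite -absv_eq0 gt_eqF.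
have [n vpi] := hp pi Kpi pi_0.
rewrite lt_def absv_nat_le1 andbT; apply: contraTneq pi1 => vp1.
by rewrite vpi -vp1 exp1rz ltxx.
Qed.

Lemma eventually_det_bound K w y (A : nat -> 'M[C]_2) : local_subfield v K -> far_from K w ->
  (forall j a b, K (A j a b)) -> cvgP1 v (fun j => mobius (A j) y) (Some w) ->
  exists2 eta, 0 < eta & exists N, forall j c, (N <= j)%N -> c != 0 -> K c ->
    mxnorm (c *: A j) = 1 -> eta <= v (\det (c *: A j)).
Proof.
move=> hK far KA cvg; have sK := ls_subfield hK.
have := notin_P1_of_cvg_far sK far KA cvg; case: y cvg => [y|] //= cvg Ky.
have [eta eta0 bound] := det_lower_bound hK Ky far.
have [N hN] := cvg _ (proj1 far).
exists eta => //; exists N => j c jN c0 Kc Aj1; apply: bound => //.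
  by move=> a b; rewrite mxE; apply: (sfM sK).
by rewrite mobiusZ // hN.
Qed.

Lemma exists_close_pair (S : finType) (F : S -> C -> Prop) (A : nat -> S -> 'M[C]_2)
    (eta : S -> R) J :
  (forall t, local_subfield v (F t)) -> (forall j t a b, F t (A j t a b)) ->
  (forall j t, mxnorm (A j t) <= 1) -> (forall t, 0 < eta t) ->
  exists i j, [/\ (J <= i)%N, (i < j)%N & forall t, mxnorm (A j t - A i t) < eta t].
Proof.
move=> hF FA A1 eta0.
have [net hnet] := boolp.choice (fun t => unit_ball_finite_net (hF t) (eta0 t)).
pose M := (\max_(t : S) size (net t)).+1.
pose near j t (ab : 'I_2 * 'I_2) := find (fun r => v (A j t ab.1 ab.2 - r) < eta t) (net t).
pose cls j := [ffun t => [ffun ab => inord (near j t ab) : 'I_M]].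
have [i [j [Ji ij cij]]] := exists_eq_after cls J.
exists i, j; split=> // t; have [a [b <-]] := mxnorm_attained (A j t - A i t).
have near_has k : has (fun r => v (A k t a b - r) < eta t) (net t).
  have [r rnet kr] := hnet t _ (FA k t a b) (le_trans (absv_le_mxnorm _ _ _) (A1 k t)).
  by apply/hasP; exists r.
have near_ij : near i t (a, b) = near j t (a, b).
  have near_lt k : (near k t (a, b) < M)%N.
    by rewrite ltnS (leq_trans (find_size _ _)) ?(leq_bigmax t).
  have := congr1 (fun f : {ffun S -> {ffun 'I_2 * 'I_2 -> 'I_M}} => val (f t (a, b))) cij.
  by rewrite /= !ffunE /= !inordK.
have := nth_find 0 (near_has i); have := nth_find 0 (near_has j).
rewrite -/(near j t (a, b)) -/(near i t (a, b)) near_ij !mxE.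
set r := nth 0 _ _ => jr ir.
have -> : A j t a b - A i t a b = (A j t a b - r) - (A i t a b - r) by ring.
by apply: absvD_lt; rewrite ?absvN.
Qed.

End NonArchimedean.

(** * Subgroups of PGL_2(F_S) and the theorem *)

Section PGLSubgroup.
Variables (C : fieldType) (S : finType) (F : S -> C -> Prop) (G : (S -> 'M[C]_2) -> Prop).
Hypothesis hG : PGL_subgroup F G.

Lemma PGL_det g t : G g -> \det (g t) != 0.
Proof. by move=> Gg; have [_] := sg_GL hG Gg t. Qed.

Lemma PGL_unitmx g t : G g -> g t \in unitmx.
Proof. by move=> Gg; rewrite unitmxE unitfE PGL_det. Qed.

Lemma PGL_expr g n : G g -> G (fun t => g t ^+ n).
Proof.
move=> Gg; elim: n => [|n ih].
  have -> : (fun t => g t ^+ 0) = (@one_fam C S) by apply: boolp.funext => t; rewrite expr0.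
  exact: sg_1 hG.
have -> : (fun t => g t ^+ n.+1) = fun t => g t *m g t ^+ n.
  by apply: boolp.funext => t; rewrite exprS mulmxE.
exact (sg_M hG Gg ih).
Qed.

Lemma proj_eq_sym (g h : S -> 'M[C]_2) : proj_eq g h -> proj_eq h g.
Proof.
move=> gh t; have [l l0 ->] := gh t; exists l^-1; first by rewrite invr_eq0.
by rewrite scalerA mulVf // scale1r.
Qed.

Lemma proj_eq_expr_neq g a b : torsion_free G -> G g -> ~ proj_eq g (@one_fam C S) -> (a < b)%N ->
  ~ proj_eq (fun t => g t ^+ a) (fun t => g t ^+ b).
Proof.
move=> htf Gg g1 ab gab; apply/g1/(htf g (b - a)%N Gg); first by rewrite subn_gt0.
move=> t; have [l l0 hl] := gab t.
have ua : g t ^+ a \is a GRing.unit by rewrite unitrX // PGL_unitmx.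
exists l^-1; first by rewrite invr_eq0.
have -> : g t ^+ (b - a) = l *: 1.
  by rewrite -[LHS](mulrK ua) -exprD subnK ?(ltnW ab) // hl -scalerAl mulrV.
by rewrite /one_fam scalerA mulVf // scale1r.
Qed.

Lemma proj_eq_invmx_mul g h : G g -> G h -> ~ proj_eq g h ->
  ~ proj_eq (fun t => invmx (g t) *m h t) (@one_fam C S).
Proof.
move=> Gg Gh gh E1; apply/gh/proj_eq_sym => t; have [l l0 hl] := E1 t.
exists l => //; rewrite -[g t]mulmx1 (_ : 1%:M = l *: (invmx (g t) *m h t)) //.
by rewrite -scalemxAr mulmxA mulmxV ?PGL_unitmx // mul1mx.
Qed.

Lemma limit_set_pexpn (R : realType) (v : C -> R) (p : nat) E x :
  (1 < p)%N -> torsion_free G -> G E -> ~ proj_eq E (@one_fam C S) ->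
  (forall t, cvgP1 v (fun k => mobius (E t ^+ (p ^ k)) (x t)) (x t)) -> limit_set v G x.
Proof.
move=> p1 htf GE E1 cvg; exists x, (fun k t => E t ^+ (p ^ k)); split=> //.
  by move=> k; exact: PGL_expr.
move=> i j /eqP; rewrite neq_ltn => /orP[] lt.
- by apply: proj_eq_expr_neq; rewrite // ltn_exp2l.
- by move/proj_eq_sym; apply: proj_eq_expr_neq; rewrite // ltn_exp2l.
Qed.

End PGLSubgroup.

Section Semisimple.
Variables (R : realType) (C : fieldType) (v : C -> R).
Hypothesis hv : nonarch_abs v.
Variables (S : finType) (F : S -> C -> Prop) (G : (S -> 'M[C]_2) -> Prop).
Hypotheses (hF : forall t, local_subfield v (F t)) (hG : PGL_subgroup F G).

Lemma plectic_far_coord L s w x : plectic_decomp v F G L ->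
  (forall t, far_from v (F t) (w t)) -> limit_set v G x ->
  (forall t, t != s -> x t = Some (w t)) -> L s (x s).
Proof.
move=> [LF hL] far lx xw; have [t Lt] := (hL x).1 lx.
have [<- //|ts] := eqVneq t s.
by have := LF t _ Lt; rewrite xw //= => /(far_from_notin hv (far t)).
Qed.

Lemma contracting_element s w x : (forall t, far_from v (F t) (w t)) -> limit_set v G x ->
  (forall t, t != s -> x t = Some (w t)) ->
  exists E, [/\ G E, ~ proj_eq E (@one_fam C S) &
    forall t, t != s -> exists c Y, [/\ c != 0, E t = c *: (1 + Y) & mxnorm v Y < 1]].
Proof.
move=> far [y [gam [Ggam gam_neq cvg]]] xw.
have Fgam j t a b : F t (gam j t a b) by have [] := sg_GL hG (Ggam j) t.
have gam0 j t : gam j t != 0.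
  by apply: contraNneq (PGL_det hG t (Ggam j)) => ->; rewrite det0.
have bound t : exists eta, 0 < eta /\ exists N, t != s -> forall j c, (N <= j)%N -> c != 0 ->
    F t c -> mxnorm v (c *: gam j t) = 1 -> eta <= v (\det (c *: gam j t)).
  have [_|ts] := eqVneq t s; first by exists 1; split=> //; exists 0%N.
  have := cvg t; rewrite xw // => cvgt.
  have [eta eta0 [N hN]] := eventually_det_bound hv (hF t) (far t) (Fgam ^~ t) cvgt.
  by exists eta; split=> //; exists N.
have [eta heta] := boolp.choice bound.
have [N hN] := boolp.choice (fun t => proj2 (heta t)).
have [sc hsc] := boolp.choice (fun jt : nat * S =>
  mxnormalize hv (ls_subfield (hF jt.2)) (Fgam jt.1 jt.2) (gam0 jt.1 jt.2)).
pose A j t := sc (j, t) *: gam j t.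
have FA j t a b : F t (A j t a b).
  by rewrite mxE; apply: sfM (ls_subfield (hF t)) _ _ _ (Fgam j t a b); case: (hsc (j, t)).
have A1 j t : mxnorm v (A j t) = 1 by case: (hsc (j, t)).
have A1le j t : mxnorm v (A j t) <= 1 by rewrite A1.
have [i [j [Ni ij close]]] := exists_close_pair hv (\max_t N t) hF FA
  A1le (fun t => proj1 (heta t)).
exists (fun t => invmx (gam i t) *m gam j t); split.
- exact (sg_M hG (sg_V hG (Ggam i)) (Ggam j)).
- have ij' : i <> j by move=> eij; rewrite eij ltnn in ij.
  exact (proj_eq_invmx_mul hG (Ggam i) (Ggam j) (gam_neq i j ij')).
move=> t ts; have [sci0 Fsci _] := hsc (i, t); have [scj0 _ _] := hsc (j, t).
have Nit : (N t <= i)%N := leq_trans (leq_bigmax t) Ni.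
have detA : mxnorm v (A j t - A i t) < v (\det (A i t)).
  exact: lt_le_trans (close t) (hN t ts i _ Nit sci0 Fsci (A1 i t)).
have [Y [AY Y1]] := invmx_mul_near1 hv (A1le i t) detA.
exists (sc (i, t) / sc (j, t)), Y; split=> //; first exact: mulf_neq0 sci0 (invr_neq0 scj0).
by rewrite (invmx_mulmxZ _ sci0 scj0 (PGL_unitmx hG t (Ggam i))) AY.
Qed.

End Semisimple.

Theorem lemma2p17 (p : nat) (R : realType) (C : fieldType) (v : C -> R)
    (hC : Cp_setting v p)
    (S : finType) (hS : (0 < #|S|)%N) (F : S -> C -> Prop)
    (hF : forall s, local_subfield v (F s))
    (G : (S -> 'M[C]_2) -> Prop)
    (hG : PGL_subgroup F G) (htf : torsion_free G)
    (L : S -> P1 C -> Prop) (hL : plectic_decomp v F G L) :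
  forall s, ~ (exists z, L s z /\ forall w, L s w -> w = z).
Proof.
move=> s [z [Lz Lu]].
have hv := cs_abs hC; have hp := Cp_absv_p_lt1 hv hC; have p1 := prime_gt1 (cs_prime hC).
have [w far] := boolp.choice (fun t => far_point_exists hv (cs_closed hC) (hF t)).
pose x t := if t == s then z else Some (w t).
have xw t : t != s -> x t = Some (w t) by rewrite /x => /negbTE ->.
have lx : limit_set v G x by apply/(proj2 hL); exists s; rewrite /x eqxx.
have [E [GE E1 nearE]] := contracting_element hv hF hG far lx xw.
have wz : Some (w s) != z.
  apply/eqP => wsz; apply: (far_from_notin hv (far s)).
  by have := proj1 hL s z Lz; rewrite -wsz.
have [u uz cvgu] := mobius_pexpn_dichotomy hv (cs_closed hC) hp (PGL_det hG s GE) wz.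
pose x' t := if t == s then u else Some (w t).
have lx' : limit_set v G x'.
  apply: (limit_set_pexpn hG p1 htf GE E1) => t; rewrite /x'.
  have [->|ts] := eqVneq t s; first exact: cvgu.
  by have [c [Y [c0 -> Y1]]] := nearE t ts; exact: mobius_pexpn_near1.
have xw' t : t != s -> x' t = Some (w t) by rewrite /x' => /negbTE ->.
by move/eqP: uz; apply; apply: Lu; have := plectic_far_coord hv hL far lx' xw'; rewrite /x' eqxx.
Qed.
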